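(* Let $G$ be a finite connected graph (loops and multiple edges allowed) with a cut vertex $v$, and let $G=H_1\vee H_2$ be a decomposition associated to $v$, i.e. $H_1,H_2$ are connected subgraphs of $G$ with $V(H_1)\cap V(H_2)=\{v\}$, $E(H_1)\cap E(H_2)=\emptyset$ and $H_1\cup H_2=G$. For $D_j\in\operatorname{Div}(H_j)$ ($j=1,2$) define $D_1+D_2\in\operatorname{Div}(G)$ by $(D_1+D_2)(v)=D_1(v)+D_2(v)$, $(D_1+D_2)(u)=D_1(u)$ for $u\in V(H_1)\setminus\{v\}$ and $(D_1+D_2)(u)=D_2(u)$ for $u\in V(H_2)\setminus\{v\}$. Then: (1) The map $\operatorname{Div}(H_1)\oplus\operatorname{Div}(H_2)\to\operatorname{Div}(G)$, $(D_1,D_2)\mapsto D_1+D_2$, is a surjective homomorphism with kernel isomorphic to $\mathbb{Z}$; it induces an isomorphism $\operatorname{Prin}(H_1)\oplus\operatorname{Prin}(H_2)\cong\operatorname{Prin}(G)$ and an exact sequence $0\to\mathbb{Z}\to\operatorname{Jac}(H_1)\oplus\operatorname{Jac}(H_2)\to\operatorname{Jac}(G)\to 0$. (2) For $j=1,2$, the extension-by-zero map $\operatorname{Div}(H_j)\to\operatorname{Div}(G)$ is injective, maps $\operatorname{Prin}(H_j)$ injectively into $\operatorname{Prin}(G)$, and induces an injective map $\operatorname{Jac}(H_j)\to\operatorname{Jac}(G)$, so that the diagram formed by the exact sequences $0\to\operatorname{Prin}\to\operatorname{Div}\to\operatorname{Jac}\to0$ for $H_j$ and for $G$ commutes with injective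 vertical arrows. (3) For all $D_1\in\operatorname{Div}(H_1)$, $D_2\in\operatorname{Div}(H_2)$ we have $r_G(D_1+D_2)\ge\min\{r_{H_1}(D_1),r_{H_2}(D_2)\}$. (4) For $j=1,2$ and every $D_j\in\operatorname{Div}(H_j)$ (viewed in $\operatorname{Div}(G)$ by extension by zero) we have $r_{H_j}(D_j)\ge r_G(D_j)$.
   Context: Graphs are finite and connected, loops and multiple edges allowed. For a graph $G$, $\operatorname{Div}(G)$ is the free abelian group on $V(G)$; write $D=\sum_v D(v)v$, $\deg D=\sum_v D(v)$, and $D\ge0$ (effective) if all $D(v)\ge0$. Define $(v\cdot w)$ as the number of edges joining $v$ and $w$ if $v\ne w$, and $(v\cdot v)=-\operatorname{val}(v)+2\operatorname{loop}(v)$, where $\operatorname{val}(v)$ is the valency (a loop counts twice) and $\operatorname{loop}(v)$ the number of loops at $v$. Set $T_v=\sum_{w\in V(G)}(v\cdot w)w$; $\operatorname{Prin}(G)$ is the subgroup generated by all $T_v$, $D\sim D'$ iff $D-D'\in\operatorname{Prin}(G)$, and $\operatorname{Jac}(G)=\operatorname{Div}(G)/\operatorname{Prin}(G)$. Let $|D|=\{E\ge0: E\sim D\}$. The rank $r_G(D)$ is $-1$ if $|D|=\emptyset$, and otherwise the maximum $k\ge0$ such that $|D-E|\neq\emptyset$ for every effective $E$ of degree $k$. *)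

From HB Require Import structures.
From mathcomp Require Import all_boot all_order all_algebra.
From mathcomp Require Import boolp.
Set Implicit Arguments. Unset Strict Implicit. Unset Printing Implicit Defensive.
Import Order.TTheory GRing.Theory Num.Theory.
Local Open Scope ring_scope.

(* A finite multigraph: vertices, edges, and the two (possibly equal) endpoints
   of each edge.  An edge e with ends e = (x, x) is a loop at x. *)
Record graph := Graph {
  vert : finType;
  edge : finType;
  ends : edge -> vert * vert }.

Section GraphDefs.
Variable G : graph.

Definition adj : rel (vert G) :=
  fun x y => [exists e, (ends e == (x, y)) || (ends e == (y, x))].

Definition connected_graph : Prop := forall x y : vert G, connect adj x y.

Definition cut_vertex (v : vert G) : Prop :=
  exists x y : vert G, [/\ x != v, y != v &
    ~~ connect (fun a b => [&& a != v, b != v & adj a b]) x y].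

(* valency (a loop counts twice) and number of loops *)
Definition valency (x : vert G) : nat :=
  \sum_(e : edge G) (((ends e).1 == x) + ((ends e).2 == x))%N.
Definition nloops (x : vert G) : nat := #|[set e : edge G | ends e == (x, x)]|.

Definition inum (x y : vert G) : int :=
  if x == y then - (valency x)%:Z + 2%:Z * (nloops x)%:Z
  else (#|[set e : edge G | (ends e == (x, y)) || (ends e == (y, x))]|)%:Z.

Notation Div := {ffun vert G -> int}.

Definition Tdiv (x : vert G) : Div := [ffun y => inum x y].

Definition isPrin (D : Div) : Prop :=
  exists c : {ffun vert G -> int}, D = \sum_(x : vert G) (Tdiv x *~ c x).

Definition lequiv (D D' : Div) : Prop := isPrin (D - D').

Definition effective (D : Div) : Prop := forall x, 0 <= D x.
Definition deg (D : Div) : int := \sum_(x : vert G) D x.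

Definition linsys_ne (D : Div) : Prop :=
  exists E : Div, effective E /\ lequiv E D.

Definition rank_cond (D : Div) (k : nat) : Prop :=
  forall E : Div, effective E -> deg E = k%:Z -> linsys_ne (D - E).

(* r_G(D): -1 if |D| is empty, otherwise the maximal k >= 0 with rank_cond D k.
   (Such k is at most deg D, since principal divisors have degree 0, so the
   maximum may be taken over k <= |deg D|.) *)
Definition rank (D : Div) : int :=
  if pselect (linsys_ne D)
  then ((\max_(k < (absz (deg D)).+1 | `[< rank_cond D k >]) k)%N)%:Z
  else -1.

Definition ptdiv (x : vert G) : Div := [ffun y => (y == x)%:Z].

End GraphDefs.

Notation Div G := {ffun vert G -> int}.

Definition extz (H G : graph) (f : vert H -> vert G) (D : Div H) : Div G :=
  [ffun u => \sum_(x : vert H | f x == u) D x].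

Definition dsum (H1 H2 G : graph) (f1 : vert H1 -> vert G) (f2 : vert H2 -> vert G)
  (D1 : Div H1) (D2 : Div H2) : Div G := extz f1 D1 + extz f2 D2.

Definition subgraph_emb (H G : graph) (fV : vert H -> vert G) (fE : edge H -> edge G) : Prop :=
  [/\ injective fV, injective fE &
      forall e, ends (fE e) = (fV (ends e).1, fV (ends e).2)].

Definition decomposition (G H1 H2 : graph) (v : vert G)
  (fV1 : vert H1 -> vert G) (fE1 : edge H1 -> edge G)
  (fV2 : vert H2 -> vert G) (fE2 : edge H2 -> edge G) : Prop :=
  [/\ subgraph_emb fV1 fE1 /\ subgraph_emb fV2 fE2,
      connected_graph H1 /\ connected_graph H2,
      (exists x, fV1 x = v) /\ (exists y, fV2 y = v) /\
        (forall x y, fV1 x = fV2 y -> fV1 x = v),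
      (forall e1 e2, fE1 e1 <> fE2 e2) &
      (forall u, (exists x, fV1 x = u) \/ (exists y, fV2 y = u)) /\
      (forall e, (exists e1, fE1 e1 = e) \/ (exists e2, fE2 e2 = e))].

From HB Require Import structures.
From mathcomp Require Import all_boot all_order all_algebra.
From mathcomp Require Import boolp.
From mathcomp Require Import zify.
Set Implicit Arguments. Unset Strict Implicit. Unset Printing Implicit Defensive.
Import Order.TTheory GRing.Theory Num.Theory.
Local Open Scope ring_scope.

(* The intersection pairing is a sum of contributions of single edges, and the
   edges of G are partitioned between H1 and H2.  Hence every T_x of G is the
   sum of the extensions by zero of the T_a of H1 and H2 lying over x.  Away
   from the cut vertex only one term occurs, so T_a of H1 extends to T_(fV1 a);
   and T_v1 is minus the sum of the other T_a, as the rows of the symmetric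
   pairing sum to 0.  This gives Prin(G) = Prin(H1) + Prin(H2), and the
   algebraic statements follow since D1 + D2 only mixes the values at v.
   For the ranks, an effective E on G splits into effective E1, E2 with
   deg E1 + deg E2 = deg E, which gives (3).  For (4), if F >= 0 is equivalent
   to D on G, write F - D = P1 + P2 with P_j principal on H_j; P2 has degree 0
   and is nonnegative off the cut vertex, so P2(v2) <= 0 and D + P1 >= 0. *)

Section EdgeContributions.
Variable G : graph.

Definition edge_inum (e : edge G) (x y : vert G) : int :=
  (((((ends e).1 == x) * ((ends e).2 == y)) + (((ends e).1 == y) * ((ends e).2 == x)))%N)%:Z
  - (((x == y) * (((ends e).1 == x) + ((ends e).2 == x)))%N)%:Z.

Lemma edge_inumE (e : edge G) (x y : vert G) : edge_inum e x y =
  if x == y then - ((((ends e).1 == x) + ((ends e).2 == x))%N)%:Z + 2%:Z * ((ends e == (x, x)) : nat)%:Z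
  else ((ends e == (x, y)) || (ends e == (y, x)) : nat)%:Z.
Proof.
rewrite /edge_inum; case: (ends e) => p q /=.
case: (eqVneq x y) => [<-|nxy].
  by rewrite !xpair_eqE; case: (p == x); case: (q == x).
have nyx : (y == x) = false by rewrite eq_sym (negbTE nxy).
rewrite !xpair_eqE mul0n subr0.
case: (eqVneq p x) => [->|npx]; rewrite ?(negbTE nxy) ?nyx /=.
  by case: (q == y); case: (q == x).
by case: (p == y); case: (q == x).
Qed.

Lemma inum_edge_sum (x y : vert G) : inum x y = \sum_e edge_inum e x y.
Proof.
under eq_bigr do rewrite edge_inumE.
rewrite /inum; case: (x == y).
  rewrite big_split /= sumrN -mulr_sumr /valency raddf_sum; congr (_ + _ * _).
  rewrite /nloops -sum1_card raddf_sum big_mkcond /=; apply: eq_bigr => e _.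
  by rewrite inE; case: (_ == _).
rewrite -sum1_card raddf_sum big_mkcond /=; apply: eq_bigr => e _.
by rewrite inE; case: (_ || _).
Qed.

Lemma inum_sym (x y : vert G) : inum x y = inum y x.
Proof.
rewrite /inum eq_sym; case: eqP => [->//|_]; congr Posz; apply: eq_card => e.
by rewrite !inE orbC.
Qed.

Lemma edge_inum_row_sum (e : edge G) (x : vert G) : \sum_y edge_inum e x y = 0.
Proof.
have sum_eq1 (a : vert G) : (\sum_y ((a == y) : nat))%N = 1%N.
  by rewrite (bigD1 a) //= eqxx big1 // => y /negbTE; rewrite eq_sym => ->.
rewrite /edge_inum sumrB -!raddf_sum /=; apply/eqP; rewrite subr_eq0; apply/eqP.
congr Posz; rewrite !big_split /= -big_distrr /= -!big_distrl /= !sum_eq1.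
by rewrite mulr1 !mul1r.
Qed.

End EdgeContributions.

Section Divisors.
Variable G : graph.
Implicit Types D E F P : Div G.

Lemma degD D E : deg (D + E) = deg D + deg E.
Proof. by rewrite /deg -big_split; apply: eq_bigr => x _; rewrite ffunE. Qed.

Lemma degN D : deg (- D) = - deg D.
Proof. by rewrite /deg -sumrN; apply: eq_bigr => x _; rewrite ffunE. Qed.

Lemma degB D E : deg (D - E) = deg D - deg E.
Proof. by rewrite degD degN. Qed.

Lemma degMz D n : deg (D *~ n) = deg D *~ n.
Proof. by rewrite /deg mulrz_suml; apply: eq_bigr => x _; rewrite ffunMzE. Qed.

Lemma deg_sum (I : finType) (F : I -> Div G) : deg (\sum_i F i) = \sum_i deg (F i).
Proof. by rewrite /deg exchange_big /=; apply: eq_bigr => x _; rewrite sum_ffunE. Qed.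

Lemma deg_ptdivMz (x : vert G) n : deg (ptdiv x *~ n) = n.
Proof.
rewrite degMz /deg (bigD1 x) //= ffunE eqxx big1 ?addr0; first exact: intz.
by move=> y /negbTE h; rewrite ffunE h.
Qed.

Lemma deg_Tdiv (x : vert G) : deg (Tdiv x) = 0.
Proof.
rewrite /deg (eq_bigr (fun y => inum x y)); last by move=> y _; rewrite ffunE.
under eq_bigr do rewrite inum_edge_sum.
by rewrite exchange_big /= big1 // => e _; rewrite edge_inum_row_sum.
Qed.

Lemma sum_Tdiv : \sum_(x : vert G) Tdiv x = 0 :> Div G.
Proof.
apply/ffunP => y; rewrite sum_ffunE [RHS]ffunE; transitivity (deg (Tdiv y)).
  by apply: eq_bigr => x _; rewrite !ffunE inum_sym.
exact: deg_Tdiv.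
Qed.

Lemma isPrin0 : isPrin (0 : Div G).
Proof. by exists 0; rewrite big1 // => x _; rewrite ffunE mulr0z. Qed.

Lemma isPrinD P P' : isPrin P -> isPrin P' -> isPrin (P + P').
Proof.
move=> [c ->] [c' ->]; exists (c + c'); rewrite -big_split /=.
by apply: eq_bigr => x _; rewrite ffunE mulrzDr.
Qed.

Lemma isPrinN P : isPrin P -> isPrin (- P).
Proof.
move=> [c ->]; exists (- c); rewrite -sumrN.
by apply: eq_bigr => x _; rewrite ffunE mulrNz.
Qed.

Lemma isPrinMz P n : isPrin P -> isPrin (P *~ n).
Proof.
move=> [c ->]; exists (c *~ n); rewrite mulrz_suml.
by apply: eq_bigr => x _; rewrite ffunMzE mulrzz mulrzA.
Qed.

Lemma isPrin_sum (I : finType) (Q : pred I) (F : I -> Div G) :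
  (forall i, Q i -> isPrin (F i)) -> isPrin (\sum_(i | Q i) F i).
Proof. by apply: (big_ind (@isPrin G)); [exact: isPrin0 | exact: isPrinD]. Qed.

Lemma isPrin_Tdiv (x : vert G) : isPrin (Tdiv x).
Proof.
exists [ffun y => ((y == x) : nat)%:Z].
rewrite (bigD1 x) //= ffunE eqxx mulr1z big1 ?addr0 // => y /negbTE nyx.
by rewrite ffunE nyx mulr0z.
Qed.

Lemma deg_isPrin P : isPrin P -> deg P = 0.
Proof. by move=> [c ->]; rewrite deg_sum big1 // => x _; rewrite degMz deg_Tdiv mul0rz. Qed.

Lemma isPrin_ptdivMz (x : vert G) n : isPrin (ptdiv x *~ n) -> n = 0.
Proof. by move/deg_isPrin; rewrite deg_ptdivMz. Qed.

Lemma ptdivMz_eq0 (x : vert G) n : ptdiv x *~ n = 0 -> n = 0.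
Proof. by move=> h; have := deg_ptdivMz x n; rewrite h /deg big1 // => a _; rewrite ffunE. Qed.

Lemma lequiv_refl D : lequiv D D.
Proof. by rewrite /lequiv subrr; exact: isPrin0. Qed.

Lemma effectiveD D E : effective D -> effective E -> effective (D + E).
Proof. by move=> h h' x; rewrite ffunE addr_ge0. Qed.

Lemma effective_ptdivMz (x : vert G) (k : nat) : effective (ptdiv x *~ k%:Z).
Proof. by move=> y; rewrite ffunMzE ffunE mulrz_ge0. Qed.

Lemma deg_effective_ge0 D : effective D -> 0 <= deg D.
Proof. by move=> h; apply: sumr_ge0 => x _; apply: h. Qed.

End Divisors.

Section Rank.
Variables (G : graph) (x0 : vert G).
Implicit Types D E F : Div G.

(* Testing rank_cond against k x0 shows that rank_cond D k forces both
   |D| <> 0 and k <= deg D. *)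
Lemma rank_cond_linsys D k : rank_cond D k -> linsys_ne D.
Proof.
move=> /(_ (ptdiv x0 *~ k%:Z) (effective_ptdivMz x0 k) (deg_ptdivMz x0 k)) [F [hF hl]].
exists (F + ptdiv x0 *~ k%:Z); split; first exact: effectiveD (effective_ptdivMz x0 k).
by move: hl; rewrite /lequiv opprB addrA.
Qed.

Lemma rank_cond_le_deg D k : rank_cond D k -> k%:Z <= deg D.
Proof.
move=> /(_ (ptdiv x0 *~ k%:Z) (effective_ptdivMz x0 k) (deg_ptdivMz x0 k)) [F [hF hl]].
move: (deg_isPrin hl); rewrite !degB deg_ptdivMz => /eqP; rewrite subr_eq0 => /eqP h.
by rewrite -subr_ge0 -h deg_effective_ge0.
Qed.

Lemma rank_condW D k k' : rank_cond D k -> (k' <= k)%N -> rank_cond D k'.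
Proof.
move=> h hk E' hE' dE'.
have := h (E' + ptdiv x0 *~ (k - k')%N%:Z) (effectiveD hE' (effective_ptdivMz _ _)).
rewrite degD dE' deg_ptdivMz -PoszD subnKC // => /(_ erefl) [F [hF hl]].
exists (F + ptdiv x0 *~ (k - k')%N%:Z); split; first exact: effectiveD (effective_ptdivMz _ _).
by move: hl; rewrite /lequiv; congr isPrin; rewrite !opprB !addrA [F + E' + _]addrAC.
Qed.

Lemma linsys_rank_cond0 D : linsys_ne D -> rank_cond D 0.
Proof.
move=> h E hE dE; suff -> : E = 0 by rewrite subr0.
apply/ffunP => x; rewrite ffunE.
by apply: (psumr_eq0P (P := predT) (F := fun x => E x)) => // y _; apply: hE.
Qed.

Lemma rank_geP D (k : nat) : (k%:Z <= rank D) <-> rank_cond D k.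
Proof.
rewrite /rank; case: pselect => [hl|nl]; last first.
  by split=> // /rank_cond_linsys.
rewrite lez_nat; split=> [hk|h].
  apply: (rank_condW _ hk); apply: (big_ind (rank_cond D)) => //.
  - exact: linsys_rank_cond0.
  - by move=> a b ha hb; rewrite /maxn; case: ifP.
  - by move=> i /asboolP.
have hk : (k < (absz (deg D)).+1)%N by have := rank_cond_le_deg h; lia.
by apply: (leq_bigmax_cond (Ordinal hk)); apply/asboolP.
Qed.

Lemma rank_geN1 D : -1 <= rank D.
Proof. by rewrite /rank; case: pselect. Qed.

Lemma rank_ge_cond (m : int) D :
  (forall k : nat, k%:Z <= m -> rank_cond D k) -> m <= rank D.
Proof.
case: m => [n|n] h; last by apply: le_trans (rank_geN1 D); lia.
exact/rank_geP/h.
Qed.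

End Rank.

Section ExtensionByZero.
Variables (H G : graph) (fV : vert H -> vert G) (fE : edge H -> edge G).
Hypothesis emb : subgraph_emb fV fE.

Lemma emb_injV : injective fV.
Proof. by case: emb. Qed.

Lemma emb_ends e : ends (fE e) = (fV (ends e).1, fV (ends e).2).
Proof. by case: emb. Qed.

Lemma extz_im (D : Div H) a : extz fV D (fV a) = D a.
Proof. by rewrite ffunE (big_pred1 a) // => a'; rewrite /= (inj_eq emb_injV). Qed.

Lemma extz_notin (D : Div H) u : (forall a, fV a != u) -> extz fV D u = 0.
Proof. by move=> h; rewrite ffunE big_pred0 // => a; apply/negbTE. Qed.

Lemma extz_inj : injective (extz fV).
Proof. by move=> D D' h; apply/ffunP => a; rewrite -(extz_im D) h extz_im. Qed.

Lemma extzD (D E : Div H) : extz fV (D + E) = extz fV D + extz fV E.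
Proof.
by apply/ffunP => u; rewrite !ffunE -big_split; apply: eq_bigr => a _; rewrite ffunE.
Qed.

Lemma extzN (D : Div H) : extz fV (- D) = - extz fV D.
Proof. by apply/ffunP => u; rewrite !ffunE -sumrN; apply: eq_bigr => a _; rewrite ffunE. Qed.

Lemma extzB (D E : Div H) : extz fV (D - E) = extz fV D - extz fV E.
Proof. by rewrite extzD extzN. Qed.

Lemma extz0 : extz fV 0 = 0.
Proof. by apply/ffunP => u; rewrite !ffunE big1 // => a _; rewrite ffunE. Qed.

Lemma extzMz (D : Div H) n : extz fV (D *~ n) = extz fV D *~ n.
Proof.
apply/ffunP => u; rewrite ffunMzE !ffunE mulrz_suml.
by apply: eq_bigr => a _; rewrite ffunMzE.
Qed.

Lemma extz_sum (I : finType) (F : I -> Div H) :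
  extz fV (\sum_i F i) = \sum_i extz fV (F i).
Proof.
apply/ffunP => u; rewrite ffunE sum_ffunE.
under eq_bigr do rewrite sum_ffunE.
by rewrite exchange_big /=; apply: eq_bigr => i _; rewrite ffunE.
Qed.

Lemma deg_extz (D : Div H) : deg (extz fV D) = deg D.
Proof. by rewrite /deg (partition_big fV predT) //=; apply: eq_bigr => u _; rewrite ffunE. Qed.

Lemma effective_extz (D : Div H) : effective D -> effective (extz fV D).
Proof. by move=> h u; rewrite ffunE sumr_ge0. Qed.

Lemma edge_inum_emb e x u :
  edge_inum (fE e) x u = \sum_(a | fV a == x) \sum_(b | fV b == u) edge_inum e a b.
Proof.
have fV_eq y a : (fV a == fV y) = (a == y) by rewrite (inj_eq emb_injV).
case: (pickP (fun a => fV a == x)) => [a /eqP <- | /= hx]; last first.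
  by rewrite big_pred0 // /edge_inum emb_ends /= !hx !muln0 !mul0n !addn0.
rewrite (big_pred1 a) => [|a']; last exact: fV_eq.
case: (pickP (fun b => fV b == u)) => [b /eqP <- | /= hu]; last first.
  by rewrite big_pred0 // /edge_inum emb_ends /= !hu !muln0 !mul0n subr0.
rewrite (big_pred1 b) => [|b']; last exact: fV_eq.
by rewrite /edge_inum emb_ends /= !fV_eq.
Qed.

Lemma sum_edge_inum_emb x u :
  \sum_e edge_inum (fE e) x u = \sum_(a | fV a == x) extz fV (Tdiv a) u.
Proof.
under eq_bigr do rewrite edge_inum_emb.
rewrite exchange_big /=; apply: eq_bigr => a _.
rewrite exchange_big /= ffunE; apply: eq_bigr => b _.
by rewrite ffunE inum_edge_sum.
Qed.

End ExtensionByZero.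

Lemma regroup_sum (H G : graph) (f : vert H -> vert G) (F : vert H -> Div G) (c : Div G) :
  \sum_x (\sum_(a | f a == x) F a) *~ c x = \sum_a F a *~ c (f a).
Proof.
rewrite [RHS](partition_big f predT) //=; apply: eq_bigr => x _.
by rewrite mulrz_suml; apply: eq_bigr => a /eqP ->.
Qed.

Lemma decompositionC (G H1 H2 : graph) (v : vert G)
  (fV1 : vert H1 -> vert G) (fE1 : edge H1 -> edge G)
  (fV2 : vert H2 -> vert G) (fE2 : edge H2 -> edge G) :
  decomposition v fV1 fE1 fV2 fE2 -> decomposition v fV2 fE2 fV1 fE1.
Proof.
case=> [[e1 e2] [c1 c2] [hx [hy hm]] hd [hc hec]]; split => //.
- by split => //; split => // y x h; rewrite h; apply: (hm x y); rewrite h.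
- by move=> a b h; apply: (hd b a); rewrite h.
- by split => u; [case: (hc u) | case: (hec u)]; auto.
Qed.

Lemma dsumC (G H1 H2 : graph) (fV1 : vert H1 -> vert G) (fV2 : vert H2 -> vert G) D1 D2 :
  dsum fV1 fV2 D1 D2 = dsum fV2 fV1 D2 D1.
Proof. by rewrite /dsum addrC. Qed.

Section DecompositionSide.
Variables (G H1 H2 : graph) (v : vert G)
  (fV1 : vert H1 -> vert G) (fE1 : edge H1 -> edge G)
  (fV2 : vert H2 -> vert G) (fE2 : edge H2 -> edge G)
  (v1 : vert H1) (v2 : vert H2).
Hypothesis dec : decomposition v fV1 fE1 fV2 fE2.
Hypotheses (hv1 : fV1 v1 = v) (hv2 : fV2 v2 = v).

Lemma decomp_emb1 : subgraph_emb fV1 fE1. Proof. by case: dec => -[]. Qed.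
Lemma decomp_emb2 : subgraph_emb fV2 fE2. Proof. by case: dec => -[]. Qed.

Lemma decomp_meet a b : fV1 a = fV2 b -> a = v1 /\ b = v2.
Proof.
case: dec => _ _ [_ [_ hm]] _ _ h.
have ha : fV1 a = v by apply: hm h.
split; first by apply: (emb_injV decomp_emb1); rewrite ha hv1.
by apply: (emb_injV decomp_emb2); rewrite -h ha hv2.
Qed.

Lemma decomp_sum_edge (F : edge G -> int) :
  \sum_e F e = \sum_e1 F (fE1 e1) + \sum_e2 F (fE2 e2).
Proof.
have [[[_ inj1 _] [_ inj2 _]] _ _ disj [_ cov]] := dec.
rewrite (bigID (fun e => e \in fE1 @: [set: edge H1])) /=.
rewrite big_imset /=; last by move=> x y _ _; apply: inj1.
rewrite (eq_bigl (fun e => e \in fE2 @: [set: edge H2])).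
  rewrite big_imset /=; last by move=> x y _ _; apply: inj2.
  by congr (_ + _); apply: eq_bigl => x; rewrite inE.
move=> e /=; case: (cov e) => [[e1 <-]|[e2 <-]].
  rewrite imset_f ?inE //=; apply/esym/negbTE/imsetP => -[e2 _ h].
  exact: (disj e1 e2).
rewrite (imset_f _ (in_setT e2)) /=; apply/negP => /imsetP [e1 _ h].
exact: (disj e1 e2 (esym h)).
Qed.

Lemma Tdiv_decomp x : Tdiv x = \sum_(a | fV1 a == x) extz fV1 (Tdiv a)
                             + \sum_(b | fV2 b == x) extz fV2 (Tdiv b).
Proof.
apply/ffunP => u; rewrite ffunE inum_edge_sum decomp_sum_edge [RHS]ffunE !sum_ffunE.
by rewrite (sum_edge_inum_emb decomp_emb1) (sum_edge_inum_emb decomp_emb2).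
Qed.

Lemma extz_Tdiv a : a != v1 -> extz fV1 (Tdiv a) = Tdiv (fV1 a).
Proof.
move=> na; rewrite Tdiv_decomp (big_pred1 a) => [|a']; last first.
  by rewrite /= (inj_eq (emb_injV decomp_emb1)).
rewrite big_pred0 ?addr0 // => b; apply/negbTE/eqP => h.
by case: (decomp_meet (esym h)) => ha _; rewrite ha eqxx in na.
Qed.

(* T_{v1} is not covered by extz_Tdiv; it is minus the sum of the others. *)
Lemma isPrin_extz (D : Div H1) : isPrin D -> isPrin (extz fV1 D).
Proof.
move=> [c ->]; rewrite (extz_sum fV1); apply: isPrin_sum => a _.
rewrite (extzMz fV1); apply: isPrinMz.
case: (eqVneq a v1) => [->|na]; last by rewrite extz_Tdiv //; apply: isPrin_Tdiv.
have := congr1 (extz fV1) (sum_Tdiv H1).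
rewrite (extz0 fV1) (extz_sum fV1) (bigD1 v1) //= => /eqP; rewrite addr_eq0 => /eqP ->.
by apply/isPrinN/isPrin_sum => b nb; rewrite extz_Tdiv //; apply: isPrin_Tdiv.
Qed.

Lemma dsum_im1 (D1 : Div H1) (D2 : Div H2) a : a != v1 -> dsum fV1 fV2 D1 D2 (fV1 a) = D1 a.
Proof.
move=> na; rewrite /dsum ffunE (extz_im decomp_emb1) (extz_notin (fV := fV2)) ?addr0 // => b.
by apply/eqP => h; case: (decomp_meet (esym h)) => ha _; rewrite ha eqxx in na.
Qed.

Lemma dsum_cut (D1 : Div H1) (D2 : Div H2) : dsum fV1 fV2 D1 D2 v = D1 v1 + D2 v2.
Proof. by rewrite /dsum ffunE -{1}hv1 (extz_im decomp_emb1) -hv2 (extz_im decomp_emb2). Qed.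

End DecompositionSide.

Section Decomposition.
Variables (G H1 H2 : graph) (v : vert G)
  (fV1 : vert H1 -> vert G) (fE1 : edge H1 -> edge G)
  (fV2 : vert H2 -> vert G) (fE2 : edge H2 -> edge G)
  (v1 : vert H1) (v2 : vert H2).
Hypothesis dec : decomposition v fV1 fE1 fV2 fE2.
Hypotheses (hv1 : fV1 v1 = v) (hv2 : fV2 v2 = v).

Lemma dsum_im2 D1 D2 b : b != v2 -> dsum fV1 fV2 D1 D2 (fV2 b) = D2 b.
Proof. by move=> nb; rewrite dsumC (dsum_im1 (decompositionC dec) hv2 hv1). Qed.

Lemma decomp_cover u : (exists a, fV1 a = u) \/ (exists b, fV2 b = u).
Proof. by case: dec => _ _ _ _ []. Qed.

Lemma dsumD D1 D1' D2 D2' :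
  dsum fV1 fV2 (D1 + D1') (D2 + D2') = dsum fV1 fV2 D1 D2 + dsum fV1 fV2 D1' D2'.
Proof. by rewrite /dsum (extzD fV1) (extzD fV2) addrACA. Qed.

Lemma dsumB D1 D1' D2 D2' :
  dsum fV1 fV2 (D1 - D1') (D2 - D2') = dsum fV1 fV2 D1 D2 - dsum fV1 fV2 D1' D2'.
Proof. by rewrite dsumD /dsum (extzN fV1) (extzN fV2) opprD. Qed.

Lemma deg_dsum D1 D2 : deg (dsum fV1 fV2 D1 D2) = deg D1 + deg D2.
Proof. by rewrite /dsum degD !deg_extz. Qed.

Lemma isPrin_dsum D1 D2 : isPrin D1 -> isPrin D2 -> isPrin (dsum fV1 fV2 D1 D2).
Proof.
move=> h1 h2; apply: isPrinD; first exact: (isPrin_extz dec hv1 hv2).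
exact: (isPrin_extz (decompositionC dec) hv2 hv1).
Qed.

Lemma lequiv_dsum D1 D1' D2 D2' : lequiv D1 D1' -> lequiv D2 D2' ->
  lequiv (dsum fV1 fV2 D1 D2) (dsum fV1 fV2 D1' D2').
Proof. by rewrite /lequiv -dsumB; apply: isPrin_dsum. Qed.

Definition split1 (E : Div G) : Div H1 := [ffun a => E (fV1 a)].
Definition split2 (E : Div G) : Div H2 := [ffun b => if b == v2 then 0 else E (fV2 b)].

Lemma dsum_split (E : Div G) : dsum fV1 fV2 (split1 E) (split2 E) = E.
Proof.
apply/ffunP => u; case: (decomp_cover u) => [[a <-]|[b <-]].
  case: (eqVneq a v1) => [->|na]; last by rewrite (dsum_im1 dec hv1 hv2) // ffunE.
  by rewrite hv1 (dsum_cut dec hv1 hv2) !ffunE eqxx addr0 hv1.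
case: (eqVneq b v2) => [->|nb]; last by rewrite dsum_im2 // ffunE (negbTE nb).
by rewrite hv2 (dsum_cut dec hv1 hv2) !ffunE eqxx addr0 hv1.
Qed.

Lemma effective_split1 E : effective E -> effective (split1 E).
Proof. by move=> h a; rewrite ffunE. Qed.

Lemma effective_split2 E : effective E -> effective (split2 E).
Proof. by move=> h b; rewrite ffunE; case: ifP. Qed.

Lemma dsum_eq0 D1 D2 : dsum fV1 fV2 D1 D2 = 0 <->
  exists n : int, D1 = ptdiv v1 *~ n /\ D2 = - (ptdiv v2 *~ n).
Proof.
have ptE (T : graph) (x y : vert T) n : (ptdiv x *~ n) y = (y == x)%:Z *~ n.
  by rewrite ffunMzE ffunE.
split=> [h|[n [-> ->]]].
  exists (D1 v1); split; apply/ffunP => a; rewrite ?ffunE ptE.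
    case: (eqVneq a v1) => [->|na]; first exact/esym/intz.
    by rewrite -(dsum_im1 dec hv1 hv2 D1 D2 na) h ffunE mul0rz.
  case: (eqVneq a v2) => [->|na]; last by rewrite -(dsum_im2 D1 D2 na) h ffunE mul0rz oppr0.
  have := dsum_cut dec hv1 hv2 D1 D2; rewrite h ffunE => /eqP; rewrite eq_sym addr_eq0.
  by move/eqP ->; rewrite intz opprK.
apply/ffunP => u; case: (decomp_cover u) => [[a <-]|[b <-]].
  case: (eqVneq a v1) => [->|na].
    by rewrite hv1 (dsum_cut dec hv1 hv2) !ffunE !ptE !eqxx subrr.
  by rewrite (dsum_im1 dec hv1 hv2) // ffunE ptE (negbTE na) mul0rz.
case: (eqVneq b v2) => [->|nb].
  by rewrite hv2 (dsum_cut dec hv1 hv2) !ffunE !ptE !eqxx subrr.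
by rewrite dsum_im2 // !ffunE ptE (negbTE nb) mul0rz oppr0.
Qed.

Lemma isPrin_dsum_eq0 D1 D2 : isPrin D1 -> isPrin D2 -> dsum fV1 fV2 D1 D2 = 0 ->
  D1 = 0 /\ D2 = 0.
Proof.
move=> h1 h2 /dsum_eq0 [n [hn1 hn2]].
have n0 : n = 0 by apply: (isPrin_ptdivMz (x := v1)); rewrite -hn1.
by rewrite hn1 hn2 n0 mulr0z oppr0.
Qed.

Lemma isPrin_split P : isPrin P -> exists D1 D2,
  [/\ isPrin D1, isPrin D2 & dsum fV1 fV2 D1 D2 = P].
Proof.
move=> [c ->].
exists (\sum_a Tdiv a *~ c (fV1 a)), (\sum_b Tdiv b *~ c (fV2 b)); split.
- by exists [ffun a => c (fV1 a)]; apply: eq_bigr => a _; rewrite ffunE.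
- by exists [ffun b => c (fV2 b)]; apply: eq_bigr => b _; rewrite ffunE.
rewrite /dsum (extz_sum fV1) (extz_sum fV2).
under [RHS]eq_bigr do rewrite (Tdiv_decomp dec) mulrzDl.
rewrite big_split /= !regroup_sum.
by congr (_ + _); apply: eq_bigr => a _; rewrite extzMz.
Qed.

Lemma isPrin_dsumP D1 D2 : isPrin (dsum fV1 fV2 D1 D2) <->
  exists n : int, lequiv D1 (ptdiv v1 *~ n) /\ lequiv D2 (- (ptdiv v2 *~ n)).
Proof.
split=> [/isPrin_split [P1 [P2 [h1 h2 hP]]] | [n [h1 h2]]].
  have : dsum fV1 fV2 (D1 - P1) (D2 - P2) = 0 by rewrite dsumB hP subrr.
  move/dsum_eq0 => [n [hn1 hn2]]; exists n.
  by rewrite /lequiv -hn1 -hn2 !opprB !(addrC _ (_ - _)) !subrK.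
have -> : dsum fV1 fV2 D1 D2 = dsum fV1 fV2 (D1 - ptdiv v1 *~ n) (D2 - - (ptdiv v2 *~ n))
   + dsum fV1 fV2 (ptdiv v1 *~ n) (- (ptdiv v2 *~ n)) by rewrite -dsumD !subrK.
have /dsum_eq0 -> : exists m, ptdiv v1 *~ n = ptdiv v1 *~ m /\
  - (ptdiv v2 *~ n) = - (ptdiv v2 *~ m) by exists n.
by rewrite addr0; apply: isPrin_dsum.
Qed.

Lemma lequiv_extz (D D' : Div H1) : lequiv D D' <-> lequiv (extz fV1 D) (extz fV1 D').
Proof.
rewrite /lequiv -(extzB fV1); split; first exact: (isPrin_extz dec hv1 hv2).
rewrite -[extz fV1 _]addr0 -(extz0 fV2) => /isPrin_dsumP [n [h1 h2]].
move: h2; rewrite /lequiv sub0r opprK => /isPrin_ptdivMz hn.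
by move: h1; rewrite /lequiv hn mulr0z subr0.
Qed.

Lemma rank_dsum D1 D2 : Order.min (rank D1) (rank D2) <= rank (dsum fV1 fV2 D1 D2).
Proof.
apply: (rank_ge_cond v) => n; rewrite le_min => /andP [/(rank_geP v1) r1 /(rank_geP v2) r2].
move=> E hE dE.
have hE1 := effective_split1 hE; have hE2 := effective_split2 hE.
have := deg_dsum (split1 E) (split2 E); rewrite dsum_split dE => dd.
have := deg_effective_ge0 hE1; have := deg_effective_ge0 hE2 => g2 g1.
have [F1 [hF1 l1]] : linsys_ne (D1 - split1 E).
  by apply: (rank_condW v1 r1 (_ : absz (deg (split1 E)) <= n)%N) => //; lia.
have [F2 [hF2 l2]] : linsys_ne (D2 - split2 E).
  by apply: (rank_condW v2 r2 (_ : absz (deg (split2 E)) <= n)%N) => //; lia.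
exists (dsum fV1 fV2 F1 F2); split.
  exact: effectiveD (effective_extz _ hF1) (effective_extz _ hF2).
by rewrite -[X in _ - X](dsum_split E) -dsumB; apply: lequiv_dsum.
Qed.

Lemma linsys_extz (D : Div H1) : linsys_ne (extz fV1 D) -> linsys_ne D.
Proof.
move=> [F [hF /isPrin_split [P1 [P2 [h1 h2 hP]]]]].
have hFd : F = dsum fV1 fV2 (D + P1) P2.
  by rewrite /dsum (extzD fV1) -addrA -/(dsum fV1 fV2 P1 P2) hP addrC subrK.
have hP2 : P2 v2 <= 0.
  have := deg_isPrin h2; rewrite /deg (bigD1 v2) //= => /eqP; rewrite addr_eq0 => /eqP ->.
  by rewrite oppr_le0 sumr_ge0 // => b nb; rewrite -(dsum_im2 (D + P1) P2 nb) -hFd.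
exists (D + P1); split; last by rewrite /lequiv [D + P1]addrC addrK.
move=> a; case: (eqVneq a v1) => [->|na].
  have := hF v; rewrite hFd (dsum_cut dec hv1 hv2) => hv.
  by apply: le_trans hv _; rewrite gerDl.
by rewrite -(dsum_im1 dec hv1 hv2 (D + P1) P2 na) -hFd; apply: hF.
Qed.

Lemma rank_extz (D : Div H1) : rank (extz fV1 D) <= rank D.
Proof.
apply: (rank_ge_cond v1) => k /(rank_geP v) hc E hE dE.
apply: linsys_extz; rewrite (extzB fV1).
by apply: hc; [exact: effective_extz | rewrite deg_extz].
Qed.

End Decomposition.

Theorem lemma2p5 (G H1 H2 : graph) (v : vert G)
  (fV1 : vert H1 -> vert G) (fE1 : edge H1 -> edge G)
  (fV2 : vert H2 -> vert G) (fE2 : edge H2 -> edge G)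
  (v1 : vert H1) (v2 : vert H2) :
  connected_graph G -> cut_vertex v ->
  decomposition v fV1 fE1 fV2 fE2 ->
  fV1 v1 = v -> fV2 v2 = v ->
  (* (1) *)
  [/\ (* homomorphism *)
      (forall D1 D1' D2 D2',
         dsum fV1 fV2 (D1 + D1') (D2 + D2') = dsum fV1 fV2 D1 D2 + dsum fV1 fV2 D1' D2'),
      (* surjective *)
      (forall D : Div G, exists D1 D2, dsum fV1 fV2 D1 D2 = D) /\
      (* kernel = {(n v, -n v) : n in Z}, isomorphic to Z *)
      (forall D1 D2, dsum fV1 fV2 D1 D2 = 0 <->
         exists n : int, D1 = ptdiv v1 *~ n /\ D2 = - (ptdiv v2 *~ n)) /\
      (forall n : int, ptdiv v1 *~ n = 0 -> n = 0),
      (* Prin(H1) + Prin(H2) ~= Prin(G) *)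
      [/\ (forall D1 D2, isPrin D1 -> isPrin D2 -> isPrin (dsum fV1 fV2 D1 D2)),
          (forall P, isPrin P -> exists D1 D2,
             [/\ isPrin D1, isPrin D2 & dsum fV1 fV2 D1 D2 = P]) &
          (forall D1 D2, isPrin D1 -> isPrin D2 -> dsum fV1 fV2 D1 D2 = 0 ->
             D1 = 0 /\ D2 = 0)] &
      (* 0 -> Z -> Jac(H1) + Jac(H2) -> Jac(G) -> 0 exact,
         with Z -> Jac(H1)+Jac(H2), n |-> ([n v], [-n v]) *)
      [/\ (forall n : int, isPrin (ptdiv v1 *~ n) -> isPrin (- (ptdiv v2 *~ n)) -> n = 0),
          (forall D1 D1' D2 D2', lequiv D1 D1' -> lequiv D2 D2' ->
             lequiv (dsum fV1 fV2 D1 D2) (dsum fV1 fV2 D1' D2')),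
          (forall D1 D2, isPrin (dsum fV1 fV2 D1 D2) <->
             exists n : int, lequiv D1 (ptdiv v1 *~ n) /\ lequiv D2 (- (ptdiv v2 *~ n))) &
          (forall D : Div G, exists D1 D2, lequiv (dsum fV1 fV2 D1 D2) D)]]
  /\
  (* (2) *)
  ([/\ injective (extz fV1),
       (forall D, isPrin D -> isPrin (extz fV1 D)) &
       (forall D D', lequiv D D' <-> lequiv (extz fV1 D) (extz fV1 D'))] /\
   [/\ injective (extz fV2),
       (forall D, isPrin D -> isPrin (extz fV2 D)) &
       (forall D D', lequiv D D' <-> lequiv (extz fV2 D) (extz fV2 D'))])
  /\
  (* (3) *)
  (forall (D1 : Div H1) (D2 : Div H2),
     Order.min (rank D1) (rank D2) <= rank (dsum fV1 fV2 D1 D2))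
  /\
  (* (4) *)
  (forall D : Div H1, rank (extz fV1 D) <= rank D) /\
  (forall D : Div H2, rank (extz fV2 D) <= rank D).
Proof.
move=> _ _ dec hv1 hv2; have decC := decompositionC dec.
have [emb1 emb2] := (decomp_emb1 dec, decomp_emb2 dec).
have dsum_onto := dsum_split dec hv1 hv2.
split.
  split.
  - exact: dsumD.
  - split; [by move=> D; exists (split1 fV1 D), (split2 fV2 v2 D) | split].
    + exact: dsum_eq0 dec hv1 hv2.
    + exact: ptdivMz_eq0.
  - split; [exact: isPrin_dsum dec hv1 hv2 | exact: isPrin_split dec |].
    exact: isPrin_dsum_eq0 dec hv1 hv2.
  - split; [by move=> n /isPrin_ptdivMz | exact: lequiv_dsum dec hv1 hv2 | |].
    + exact: isPrin_dsumP dec hv1 hv2.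
    + move=> D; exists (split1 fV1 D), (split2 fV2 v2 D).
      by rewrite dsum_onto; apply: lequiv_refl.
split.
  split; split; [exact: extz_inj emb1 | exact: isPrin_extz dec hv1 hv2 |
    exact: lequiv_extz dec hv1 hv2 | exact: extz_inj emb2 |
    exact: isPrin_extz decC hv2 hv1 | exact: lequiv_extz decC hv2 hv1].
split; first exact: rank_dsum dec hv1 hv2.
by split; [exact: rank_extz dec hv1 hv2 | exact: rank_extz decC hv2 hv1].
Qed.
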